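(* For every $\delta\in(0,1]$ there is a constant $c_\delta>0$ such that the following holds. Let $A=\{a_1<a_2<\dots<a_k\}\subset\mathbb{R}$ and let $D=\{a_{i+1}-a_i: 1\le i\le k-1\}$ be its set of consecutive differences. If $|D|\ge \delta|A|$, then for every finite nonempty $B\subset\mathbb{R}$, \[ |A+B|\ge c_\delta\,|A|\,|B|^{1/2}. \]
   Context: For finite $A,B\subset\mathbb{R}$, $A+B=\{a+b: a\in A, b\in B\}$. *)

From Stdlib Require Import Reals List Sorted.
Import ListNotations.
Open Scope R_scope.

Definition card (l : list R) : nat := length (nodup Req_EM_T l).

Fixpoint consec_diffs (l : list R) : list R :=
  match l with
  | x :: ((y :: _) as t) => (y - x) :: consec_diffs t
  | _ => []
  end.

Definition sumset (A B : list R) : list R :=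
  flat_map (fun a => map (fun b => a + b) B) A.

(* Fix b in B and a difference d in D, realised by consecutive elements p < q of A.
   Then p + b < q + b both lie in S = A + B; record the ranks lo < hi of these two
   sums in S.  For a fixed b the rank intervals (lo, hi] are pairwise disjoint,
   since consecutive gaps of A do not overlap, and (lo, hi) determines (b, d).
   With t = floor (sqrt |B|) + 1: pairs with hi - lo <= t are at most |S| t by injectivity,
   and pairs with hi - lo > t are at most |B| |S| / t by disjointness.  Hence
   |B| |D| <= 4 |S| sqrt |B|, and |D| >= delta |A| gives the theorem with
   c = delta / 4. *)
From Stdlib Require Import Reals List Sorted Lia Lra.
Import ListNotations.
Open Scope R_scope.

Lemma length_le_of_injective {X Y : Type} (f : X -> Y) (l : list X) (l' : list Y) :
  NoDup l -> (forall x y, In x l -> In y l -> f x = f y -> x = y) ->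
  (forall x, In x l -> In (f x) l') -> (length l <= length l')%nat.
Proof.
  intros Hl Hinj Hmaps.
  rewrite <- (length_map f l).
  apply NoDup_incl_length.
  - apply NoDup_map_NoDup_ForallPairs; auto.
  - intros y Hy. apply in_map_iff in Hy as [x [<- Hx]]. auto.
Qed.

Lemma NoDup_list_prod {X Y : Type} (l : list X) (l' : list Y) :
  NoDup l -> NoDup l' -> NoDup (list_prod l l').
Proof.
  intros Hl Hl'. induction Hl as [|x l Hx Hl IH]; simpl; [constructor|].
  apply NoDup_app; auto.
  - apply NoDup_map_NoDup_ForallPairs; auto. intros u v _ _ E. congruence.
  - intros [u v] Hu Hv. apply in_map_iff in Hu as [w [E _]]. inversion E; subst.
    apply in_prod_iff in Hv as [Hv _]. tauto.
Qed.

Lemma length_filter_le_imp {X : Type} (f g : X -> bool) (l : list X) :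
  (forall x, f x = true -> g x = true) ->
  (length (filter f l) <= length (filter g l))%nat.
Proof.
  intros Hfg. induction l as [|x l IH]; simpl; [lia|].
  destruct (f x) eqn:Ef; [rewrite (Hfg x Ef); simpl; lia|].
  destruct (g x); simpl; lia.
Qed.

Lemma length_filter_lt_imp {X : Type} (f g : X -> bool) (l : list X) (y : X) :
  (forall x, f x = true -> g x = true) -> In y l -> f y = false -> g y = true ->
  (length (filter f l) < length (filter g l))%nat.
Proof.
  intros Hfg Hy Hf Hg. induction l as [|x l IH]; [destruct Hy|simpl].
  destruct Hy as [<-|Hy].
  - rewrite Hf, Hg. simpl. pose proof (length_filter_le_imp f g l Hfg). lia.
  - specialize (IH Hy). destruct (f x) eqn:Ef; [rewrite (Hfg x Ef); simpl; lia|].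
    destruct (g x); simpl; lia.
Qed.

Section IntervalCounting.

Variables (X Y : Type) (dom : list X) (cols : list Y) (col : X -> Y).
Variables (lo hi : X -> nat) (n : nat).
Hypothesis dom_uniq : NoDup dom.
Hypothesis col_in : forall x, In x dom -> In (col x) cols.
Hypothesis interval_in : forall x, In x dom -> (lo x < hi x <= n)%nat.
Hypothesis endpoints_inj : forall x y, In x dom -> In y dom ->
  lo x = lo y -> hi x = hi y -> x = y.
Hypothesis same_col_overlap_eq : forall x y, In x dom -> In y dom ->
  col x = col y -> (lo y < hi x)%nat -> (lo x < hi y)%nat -> x = y.

Let short t x := Nat.leb (hi x - lo x) t.

Lemma short_intervals_count t : (length (filter (short t) dom) <= n * t)%nat.
Proof.
  replace (n * t)%nat with (length (list_prod (seq 0 n) (seq 1 t)))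
    by (rewrite length_prod, !length_seq; reflexivity).
  apply (length_le_of_injective (fun x => (lo x, hi x - lo x)%nat)).
  - apply NoDup_filter; auto.
  - intros x y Hx Hy E. injection E as Elo Elen.
    apply filter_In in Hx as [Hx _]. apply filter_In in Hy as [Hy _].
    pose proof (interval_in x Hx). pose proof (interval_in y Hy).
    apply endpoints_inj; auto; lia.
  - intros x Hx. apply filter_In in Hx as [Hx Hshort]. apply Nat.leb_le in Hshort.
    pose proof (interval_in x Hx).
    apply in_prod; apply in_seq; lia.
Qed.

(* Each long interval of colour c contains t points lo x + 1, ..., lo x + t, and
   intervals of colour c are disjoint. *)
Lemma long_intervals_count t :
  (length (filter (fun x => negb (short t x)) dom) * t <= length cols * n)%nat.
Proof.
  replace (length (filter _ dom) * t)%nat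
    with (length (list_prod (filter (fun x => negb (short t x)) dom) (seq 1 t)))
    by (rewrite length_prod, length_seq; reflexivity).
  replace (length cols * n)%nat with (length (list_prod cols (seq 1 n)))
    by (rewrite length_prod, length_seq; reflexivity).
  apply (length_le_of_injective (fun xj => (col (fst xj), lo (fst xj) + snd xj)%nat)).
  - apply NoDup_list_prod; [apply NoDup_filter; auto | apply seq_NoDup].
  - intros [x i] [y j] Hxi Hyj E. simpl in E. injection E as Ecol Epoint.
    apply in_prod_iff in Hxi as [Hx Hi]. apply in_prod_iff in Hyj as [Hy Hj].
    apply in_seq in Hi. apply in_seq in Hj.
    apply filter_In in Hx as [Hx Hlong]. apply filter_In in Hy as [Hy Hlong'].
    apply Bool.negb_true_iff, Nat.leb_gt in Hlong, Hlong'.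
    assert (x = y) as <- by (apply same_col_overlap_eq; auto; lia).
    f_equal. lia.
  - intros [x i] Hxi. apply in_prod_iff in Hxi as [Hx Hi]. apply in_seq in Hi.
    apply filter_In in Hx as [Hx Hlong]. apply Bool.negb_true_iff, Nat.leb_gt in Hlong.
    pose proof (interval_in x Hx). simpl.
    apply in_prod; [auto | apply in_seq; lia].
Qed.

Lemma intervals_count t :
  (0 < t)%nat -> (length cols <= t * t)%nat -> (length dom <= 2 * n * t)%nat.
Proof.
  intros Ht Hcols.
  pose proof (filter_length (short t) dom) as Hsplit.
  pose proof (short_intervals_count t). pose proof (long_intervals_count t).
  apply (Nat.mul_le_mono_pos_r _ _ t Ht). nia.
Qed.

End IntervalCounting.

Definition rank (S : list R) (x : R) : nat :=
  length (filter (fun s => if Rle_dec s x then true else false) S).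

Lemma rank_le_mono S x y : x <= y -> (rank S x <= rank S y)%nat.
Proof.
  intros Hxy. apply length_filter_le_imp.
  intros s. do 2 destruct (Rle_dec _ _); auto. lra.
Qed.

Lemma rank_lt_mono S x y : x < y -> In y S -> (rank S x < rank S y)%nat.
Proof.
  intros Hxy Hy. apply (length_filter_lt_imp _ _ _ y); auto.
  - intros s. do 2 destruct (Rle_dec _ _); auto. lra.
  - destruct (Rle_dec _ _); auto. lra.
  - destruct (Rle_dec _ _); auto. lra.
Qed.

Lemma rank_le_length S x : (rank S x <= length S)%nat.
Proof. apply filter_length_le. Qed.

Lemma rank_inj_in S x y : In x S -> In y S -> rank S x = rank S y -> x = y.
Proof.
  intros Hx Hy E. destruct (Rtotal_order x y) as [H|[H|H]]; auto.
  - pose proof (rank_lt_mono S x y H Hy). lia.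
  - pose proof (rank_lt_mono S y x H Hx). lia.
Qed.

Fixpoint consec_pairs (l : list R) : list (R * R) :=
  match l with
  | x :: ((y :: _) as t) => (x, y) :: consec_pairs t
  | _ => []
  end.

Lemma consec_diffs_map l :
  consec_diffs l = map (fun pq => snd pq - fst pq) (consec_pairs l).
Proof.
  induction l as [|x t IH]; [reflexivity|].
  destruct t as [|y t']; [reflexivity|]. simpl in *. rewrite IH. reflexivity.
Qed.

Lemma consec_pairs_gap l p q : StronglySorted Rlt l -> In (p, q) (consec_pairs l) ->
  In p l /\ In q l /\ p < q /\ forall a, In a l -> a <= p \/ q <= a.
Proof.
  induction l as [|x t IH]; intros Hsort Hpq; [destruct Hpq|].
  inversion Hsort as [|? ? Hsort_t Hx_lt]; subst.
  rewrite Forall_forall in Hx_lt.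
  destruct t as [|y t']; [destruct Hpq|].
  destruct Hpq as [E|Hpq].
  - injection E as <- <-.
    split; [left; auto | split; [right; left; auto | split; [auto with datatypes|]]].
    intros a [<-|[<-|Ha]]; [left; lra | right; lra |].
    right. inversion Hsort_t as [|? ? _ Hy_lt]. rewrite Forall_forall in Hy_lt.
    apply Rlt_le; auto.
  - destruct (IH Hsort_t Hpq) as (Hp & Hq & Hlt & Hgap).
    split; [right; auto | split; [right; auto | split; auto]].
    intros a [<-|Ha]; auto. left. apply Rlt_le; auto.
Qed.

(* A consecutive pair realising the difference d (junk (0, 0) if d is not one). *)
Definition gap_of (A : list R) (d : R) : R * R :=
  match find (fun pq => if Req_EM_T (snd pq - fst pq) d then true else false)
             (consec_pairs A) with
  | Some pq => pq
  | None => (0, 0)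
  end.

Lemma gap_of_spec A d : In d (consec_diffs A) ->
  In (gap_of A d) (consec_pairs A) /\ snd (gap_of A d) - fst (gap_of A d) = d.
Proof.
  intros Hd. unfold gap_of.
  destruct (find _ _) as [pq|] eqn:E.
  - apply find_some in E as [Hin Hdiff]. split; auto.
    destruct (Req_EM_T _ _); congruence.
  - rewrite consec_diffs_map in Hd. apply in_map_iff in Hd as [pq [Hdiff Hin]].
    pose proof (find_none _ _ E pq Hin) as Hnone. simpl in Hnone.
    destruct (Req_EM_T _ _); congruence.
Qed.

Section SumsetRanks.

Variables (A B : list R).
Hypothesis A_sorted : StronglySorted Rlt A.

Let Sums := nodup Req_EM_T (sumset A B).
Let Diffs := nodup Req_EM_T (consec_diffs A).
Let lo (bd : R * R) := rank Sums (fst (gap_of A (snd bd)) + fst bd).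
Let hi (bd : R * R) := rank Sums (snd (gap_of A (snd bd)) + fst bd).

Lemma in_sumset p b : In p A -> In b B -> In (p + b) Sums.
Proof.
  intros Hp Hb. apply nodup_In, in_flat_map. exists p.
  split; auto. apply in_map_iff. exists b. auto.
Qed.

Lemma gap_sums_in b d : In b B -> In d Diffs ->
  In (gap_of A d) (consec_pairs A) /\ snd (gap_of A d) - fst (gap_of A d) = d /\
  In (fst (gap_of A d) + b) Sums /\ In (snd (gap_of A d) + b) Sums.
Proof.
  intros Hb Hd. apply nodup_In in Hd.
  destruct (gap_of_spec A d Hd) as [Hpq Hdiff].
  destruct (gap_of A d) as [p q]. simpl in *.
  destruct (consec_pairs_gap A p q A_sorted Hpq) as (Hp & Hq & _).
  auto using in_sumset.
Qed.

Lemma gap_ranks_in bd : In bd (list_prod B Diffs) -> (lo bd < hi bd <= card (sumset A B))%nat.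
Proof.
  destruct bd as [b d]. intros Hbd. apply in_prod_iff in Hbd as [Hb Hd].
  destruct (gap_sums_in b d Hb Hd) as (Hpq & _ & _ & Hq).
  unfold lo, hi. simpl in *.
  destruct (gap_of A d) as [p q]. simpl in *.
  destruct (consec_pairs_gap A p q A_sorted Hpq) as (_ & _ & Hlt & _).
  split; [apply rank_lt_mono; auto; lra | apply rank_le_length].
Qed.

Lemma gap_ranks_inj bd bd' : In bd (list_prod B Diffs) -> In bd' (list_prod B Diffs) ->
  lo bd = lo bd' -> hi bd = hi bd' -> bd = bd'.
Proof.
  destruct bd as [b d], bd' as [b' d']. intros Hbd Hbd' Elo Ehi.
  apply in_prod_iff in Hbd as [Hb Hd]. apply in_prod_iff in Hbd' as [Hb' Hd'].
  destruct (gap_sums_in b d Hb Hd) as (_ & Hdiff & Hp & Hq).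
  destruct (gap_sums_in b' d' Hb' Hd') as (_ & Hdiff' & Hp' & Hq').
  unfold lo, hi in Elo, Ehi. simpl in *.
  apply rank_inj_in in Elo, Ehi; auto.
  assert (d = d') as <- by lra.
  f_equal. lra.
Qed.

(* Consecutive gaps of A never overlap, so neither do their translates by b. *)
Lemma gap_ranks_overlap_eq bd bd' : In bd (list_prod B Diffs) -> In bd' (list_prod B Diffs) ->
  fst bd = fst bd' -> (lo bd' < hi bd)%nat -> (lo bd < hi bd')%nat -> bd = bd'.
Proof.
  destruct bd as [b d], bd' as [b' d']. simpl. intros Hbd Hbd' <- Hover Hover'.
  apply in_prod_iff in Hbd as [Hb Hd]. apply in_prod_iff in Hbd' as [_ Hd'].
  destruct (gap_sums_in b d Hb Hd) as (Hpq & Hdiff & _).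
  destruct (gap_sums_in b d' Hb Hd') as (Hpq' & Hdiff' & _).
  unfold lo, hi in Hover, Hover'. simpl in *.
  destruct (gap_of A d) as [p q], (gap_of A d') as [p' q']. simpl in *.
  destruct (consec_pairs_gap A p q A_sorted Hpq) as (Hp & Hq & Hlt & Hgap).
  destruct (consec_pairs_gap A p' q' A_sorted Hpq') as (Hp' & Hq' & Hlt' & Hgap').
  destruct (Rtotal_order p p') as [Hpp'|[<-|Hpp']].
  - exfalso. assert (Hle : q + b <= p' + b) by (destruct (Hgap p' Hp'); lra).
    pose proof (rank_le_mono Sums _ _ Hle). lia.
  - f_equal. destruct (Hgap q' Hq'), (Hgap' q Hq); lra.
  - exfalso. assert (Hle : q' + b <= p + b) by (destruct (Hgap' p Hp); lra).
    pose proof (rank_le_mono Sums _ _ Hle). lia.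
Qed.

Lemma card_diffs_mul_le_sumset :
  NoDup B -> (0 < length B)%nat ->
  (length B * card (consec_diffs A)
     <= 2 * card (sumset A B) * S (Nat.sqrt (length B)))%nat.
Proof.
  intros HB Hpos.
  change (card (consec_diffs A)) with (length Diffs). rewrite <- length_prod.
  apply (intervals_count _ _ (list_prod B Diffs) B fst lo hi).
  - apply NoDup_list_prod; [auto | apply NoDup_nodup].
  - intros [b d] Hbd. apply in_prod_iff in Hbd. tauto.
  - apply gap_ranks_in.
  - apply gap_ranks_inj.
  - apply gap_ranks_overlap_eq.
  - lia.
  - apply Nat.lt_le_incl, Nat.sqrt_spec. lia.
Qed.

End SumsetRanks.

Lemma succ_sqrt_le_twice_sqrt m :
  (1 <= m)%nat -> INR (S (Nat.sqrt m)) <= 2 * sqrt (INR m).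
Proof.
  intros Hm.
  assert (Hs1 : (1 <= Nat.sqrt m)%nat) by (apply Nat.sqrt_le_square; lia).
  assert (Hsq : (Nat.sqrt m * Nat.sqrt m <= m)%nat) by (apply Nat.sqrt_spec; lia).
  apply le_INR in Hs1, Hsq. rewrite mult_INR in Hsq.
  assert (INR (Nat.sqrt m) <= sqrt (INR m)).
  { rewrite <- (sqrt_square (INR (Nat.sqrt m))) by apply pos_INR.
    apply sqrt_le_1_alt. auto. }
  rewrite S_INR. simpl in Hs1. lra.
Qed.

Theorem theorem2 :
  forall delta : R, 0 < delta <= 1 ->
  exists c : R, 0 < c /\
    forall A B : list R,
      Sorted Rlt A -> NoDup B -> B <> nil ->
      INR (card (consec_diffs A)) >= delta * INR (length A) ->
      INR (card (sumset A B)) >= c * INR (length A) * sqrt (INR (length B)).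
Proof.
  intros delta Hdelta. exists (delta / 4). split; [lra|].
  intros A B HA HB Hne Hdiffs.
  assert (Hm : (1 <= length B)%nat) by (destruct B; [congruence | simpl; lia]).
  assert (HAs : StronglySorted Rlt A)
    by (apply Sorted_StronglySorted; auto; intros x y z; lra).
  pose proof (card_diffs_mul_le_sumset A B HAs HB Hm) as Hcount.
  pose proof (succ_sqrt_le_twice_sqrt _ Hm) as Hsqrt.
  apply le_INR in Hcount. rewrite !mult_INR in Hcount. simpl (INR 2) in Hcount.
  set (m := INR (length B)) in *. set (n := INR (card (sumset A B))) in *.
  set (d := INR (card (consec_diffs A))) in *.
  assert (Hm1 : 1 <= m) by (apply (le_INR 1); auto).
  assert (Hsm : sqrt m * sqrt m = m) by (apply sqrt_sqrt; lra).
  assert (Hsp : 0 < sqrt m) by (apply sqrt_lt_R0; lra).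
  assert (Hn : 0 <= n) by apply pos_INR.
  assert (Hlower : delta * INR (length A) * m <= d * m)
    by (apply Rmult_le_compat_r; lra).
  assert (Hupper : n * INR (S (Nat.sqrt (length B))) <= n * (2 * sqrt m))
    by (apply Rmult_le_compat_l; lra).
  apply Rle_ge, (Rmult_le_reg_r (sqrt m)); auto.
  rewrite <- Hsm in Hlower. nra.
Qed.
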